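(* Assume the context distribution is stationary, i.e. $p(x,t)=p(x)p(t)$ on $\mathcal{X}\times[0,T]$ and the context distribution at the target time satisfies $p(x\mid t')=p(x)$. Suppose the logging policy $\pi_0$ satisfies common support for $\pi_e$ and $t'$, i.e. $\pi_e(a\mid x,t')>0 \implies \pi_0(a\mid x,t)>0$ for all $x\in\mathcal{X}$, $t\in[0,T]$, $a\in\mathcal{A}$, and that the time feature function $\phi$ satisfies $p(\phi(t'))>0$. Then the OPFV estimator has bias $$\mathrm{Bias}\big(\hat V^{\mathrm{OPFV}}_{t'}(\pi_e;\mathcal{D})\big)=\mathbb{E}_{p(x,t)\pi_e(a\mid x,t')}\left[\frac{\mathbb{I}_\phi(t,t')}{p(\phi(t'))}\Big(\Delta_q(x,t,t',a)-\Delta_{\hat f}(x,t,t',a)\Big)\right].$$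
   Context: Contexts $x\in\mathcal{X}$, a finite action set $\mathcal{A}$, continuous time $t$, and rewards $r\in[0,r_{\max}]$. The logged data $\mathcal{D}=\{(x_i,t_i,a_i,r_i)\}_{i=1}^n$ consists of $n$ i.i.d. draws with $(x,t)\sim p(x,t)$ supported on $\mathcal{X}\times[0,T]$ ($T>0$ the end of the logging window), $a\sim\pi_0(a\mid x,t)$ (logging policy), $r\sim p(r\mid x,t,a)$; the reward distributions $p(r\mid x,t,a)$ are defined for all times $t\ge 0$, including future times. Let $q(x,t,a)=\mathbb{E}[r\mid x,t,a]$. A target time $t'>T$ and an evaluation policy $\pi_e(a\mid x,t)$ are fixed; the future policy value is $V_{t'}(\pi_e)=\mathbb{E}_{p(x\mid t')\pi_e(a\mid x,t')}[q(x,t',a)]$. A time feature function is any map $\phi$ from times to a set of labels; $\mathbb{I}_\phi(t,t')=\mathbb{I}\{\phi(t)=\phi(t')\}$ and $p(\phi(t'))=\int_0^T p(s)\,\mathbb{I}_\phi(s,t')\,ds$, where $p(t)$ is the marginal density of $t$. $\hat f:\mathcal{X}\times[0,\infty)\times\mathcal{A}\to\mathbb{R}$ is a fixed (non-random) reward regressor. The OPFV estimator is $$\hat V^{\mathrm{OPFV}}_{t'}(\pi_e;\mathcal{D})=\frac1n\sum_{i=1}^n\left\{\frac{\mathbb{I}_\phi(t_i,t')}{p(\phi(t'))}\frac{\pi_e(a_i\mid x_i,t')}{\pi_0(a_i\mid x_i,t_i)}\big(r_i-\hat f(x_i,t_i,a_i)\big)+\mathbb{E}_{\pi_e(a\mid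 x_i,t')}[\hat f(x_i,t',a)]\right\}.$$ $\mathrm{Bias}(\hat V)=\mathbb{E}_{\mathcal{D}}[\hat V]-V_{t'}(\pi_e)$. $\Delta_q(x,t,t',a)=q(x,t,a)-q(x,t',a)$ and $\Delta_{\hat f}(x,t,t',a)=\hat f(x,t,a)-\hat f(x,t',a)$. *)

From HB Require Import structures.
From mathcomp Require Import all_boot all_order all_algebra.
From mathcomp Require Import all_classical all_reals all_analysis.

Set Implicit Arguments.
Unset Strict Implicit.
Unset Printing Implicit Defensive.

Import Order.TTheory GRing.Theory Num.Theory.
Import numFieldNormedType.Exports.

Local Open Scope classical_set_scope.
Local Open Scope ring_scope.

Section OPFV.
Context {R : realType} {dX : measure_display} {Xs : measurableType dX}
        {A : finType} {L : eqType}.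

(* A logged sample (x, t, a, r). *)
Definition sample := (Xs * R * A * R)%type.

Definition Iphi (phi : R -> L) (t t' : R) : R := (phi t == phi t')%:R.

Definition pphi (pt : R -> R) (T : R) (phi : R -> L) (t' : R) : R :=
  \int[lebesgue_measure]_(s in `[0, T]) (pt s * Iphi phi s t').

(* q(x,t,a) = E[r | x,t,a] for the reward kernel kappa x t a = p(r | x,t,a) *)
Definition qmean (kappa : Xs -> R -> A -> probability R R) (x : Xs) (t : R) (a : A) : R :=
  \int[kappa x t a]_(r in [set: R]) r.

(* Expectation of g(x,t,a,r) for one logged draw:
   (x,t) ~ pxt, a ~ pi0(.|x,t), r ~ p(r|x,t,a). *)
Definition E_sample (pxt : probability (Xs * R)%type R) (pi0 : Xs -> R -> A -> R)
    (kappa : Xs -> R -> A -> probability R R) (g : sample -> R) : R :=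
  \int[pxt]_(xt in [set: (Xs * R)%type])
     (\sum_(a : A) pi0 xt.1 xt.2 a *
        \int[kappa xt.1 xt.2 a]_(r in [set: R]) g (xt.1, xt.2, a, r)).

(* Expectation over a dataset D of n i.i.d. draws (iterated integration over
   the n-fold product of the single-draw distribution). *)
Fixpoint E_data (pxt : probability (Xs * R)%type R) (pi0 : Xs -> R -> A -> R)
    (kappa : Xs -> R -> A -> probability R R) (n : nat) (G : seq sample -> R) : R :=
  match n with
  | 0%N => G [::]
  | n'.+1 => E_sample pxt pi0 kappa
               (fun s => E_data pxt pi0 kappa n' (fun D => G (s :: D)))
  end.

Definition opfv_term (pt : R -> R) (T : R) (phi : R -> L) (t' : R)
    (pi0 pie : Xs -> R -> A -> R) (fhat : Xs -> R -> A -> R) (s : sample) : R :=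
  let: (x, t, a, r) := s in
  Iphi phi t t' / pphi pt T phi t' * (pie x t' a / pi0 x t a) * (r - fhat x t a)
  + \sum_(b : A) pie x t' b * fhat x t' b.

Definition V_opfv (pt : R -> R) (T : R) (phi : R -> L) (t' : R)
    (pi0 pie : Xs -> R -> A -> R) (fhat : Xs -> R -> A -> R) (D : seq sample) : R :=
  (size D)%:R^-1 * \sum_(s <- D) opfv_term pt T phi t' pi0 pie fhat s.

(* Future policy value V_{t'}(pi_e) = E_{p(x|t') pi_e(a|x,t')}[q(x,t',a)]. *)
Definition V_true (pxt' : probability Xs R) (pie : Xs -> R -> A -> R)
    (kappa : Xs -> R -> A -> probability R R) (t' : R) : R :=
  \int[pxt']_(x in [set: Xs]) (\sum_(a : A) pie x t' a * qmean kappa x t' a).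

End OPFV.

(* Conditioning on the logged (x, t), the reward integrates out, since an
   OPFV term is affine in r, and by common support the importance weight
   pie(a|x,t') / pi0(a|x,t) cancels against pi0(a|x,t).  So an OPFV term, and
   hence the mean of n i.i.d. ones, has expectation
     E_{p(x,t)}[DM(x) + I_phi(t,t') / p(phi(t')) *
                        sum_a pie(a|x,t') (q(x,t,a) - fhat(x,t,a))],
   with DM(x) = sum_a pie(a|x,t') fhat(x,t',a), whereas
   V_t' = E_{p(x)}[DM(x) + res(x)] with
   res(x) = sum_a pie(a|x,t') (q(x,t',a) - fhat(x,t',a)).  Under stationarity
   x and t are independent under p(x,t), with x-marginal p(x|t'), and
   E_t[I_phi(t,t')] = p(phi(t')); so E_{p(x)}[res(x)] =
   E_{p(x,t)}[I_phi(t,t') / p(phi(t')) * res(x)], and subtracting gives the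
   bias formula. *)

From HB Require Import structures.
From mathcomp Require Import all_boot all_order all_algebra.
From mathcomp Require Import all_classical all_reals all_analysis.
From mathcomp Require Import measurable_realfun ring.

Import Order.TTheory GRing.Theory Num.Theory.
Import numFieldNormedType.Exports.
Import HBNNSimple.

Local Open Scope classical_set_scope.
Local Open Scope ring_scope.

Lemma le1_nonneg_sum1 {R : numDomainType} {I : finType} (w : I -> R) (i : I) :
  (forall j, 0 <= w j) -> \sum_j w j = 1 -> w i <= 1.
Proof.
by move=> w0 <-; rewrite (bigD1 i) //= lerDl sumr_ge0.
Qed.

Section integral_off_null.
Context {d} {T : measurableType d} {R : realType}.
Context {mu : {measure set T -> \bar R}} {N : set T}.
Hypotheses (mN : measurable N) (muN : mu N = 0%E).

(* No measurability is needed: the integral of a nonnegative function is a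
   supremum over the simple functions below it, and such a simple function
   can be cut down to [~` N], where the two integrands agree. *)
Lemma ge0_le_integral_off_null (f g : T -> \bar R) :
  (forall x, (0 <= f x)%E) -> (forall x, (0 <= g x)%E) ->
  (forall x, ~ N x -> f x = g x) -> (\int[mu]_x f x <= \int[mu]_x g x)%E.
Proof.
move=> f0 g0 fg; rewrite (ge0_integralTE mu f0) (ge0_integralTE mu g0).
apply: ge_ereal_sup => _ [h hf <-].
have mNC : measurable (~` N) by exact: measurableC.
apply: ereal_sup_ubound; exists (proj_nnsfun h mNC).
  move=> x /=; rewrite /mindic indicE.
  have [Nx|Nx] := pselect (N x); last by rewrite mem_set // mulr1 -fg.
  by rewrite memNset ?mulr0 //=; apply.
have sintegralE (k : {nnsfun T >-> R}) :
    sintegral mu k = (\int[mu]_x (k x)%:E)%E.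
  by rewrite integral_nnsfun // patch_setT.
rewrite !sintegralE.
apply: ae_eq_integral => //; try exact/measurable_EFinP.
exists N; split => // x /= /not_implyP[_] hx; apply: contrapT => Nx; apply: hx.
by rewrite /mindic indicE mem_set // mulr1.
Qed.

Lemma integral_eq_off_null (f g : T -> \bar R) :
  (forall x, ~ N x -> f x = g x) -> (\int[mu]_x f x = \int[mu]_x g x)%E.
Proof.
move=> fg.
have fg_pos x : ~ N x -> (f^\+ x = g^\+ x)%E by move=> Nx; rewrite !funeposE fg.
have fg_neg x : ~ N x -> (f^\- x = g^\- x)%E by move=> Nx; rewrite !funenegE fg.
rewrite integralE [RHS]integralE; congr (_ - _)%E; apply/eqP; rewrite eq_le.
  by rewrite !ge0_le_integral_off_null // => x /fg_pos ->.
by rewrite !ge0_le_integral_off_null // => x /fg_neg ->.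
Qed.

Lemma Rintegral_eq_off_null (f g : T -> R) :
  (forall x, ~ N x -> f x = g x) -> \int[mu]_x f x = \int[mu]_x g x.
Proof.
by move=> fg; congr fine; apply: integral_eq_off_null => x /fg ->.
Qed.

End integral_off_null.

Lemma bounded_norm_le {T : Type} {R : realType} (A : set T) [h : T -> R] [M : R] :
  (forall x, `|h x| <= M) -> [bounded h x | x in A].
Proof.
move=> hM; exists M; split=> [|y My x _]; first exact: num_real.
exact: le_trans (hM x) (ltW My).
Qed.

Section integrable_EFin.
Context {d} {T : measurableType d} {R : realType}.
Context {mu : {measure set T -> \bar R}}.

Lemma integrable_EFin_sum [I : finType] [F : I -> T -> R] :
  (forall i, mu.-integrable setT (EFin \o F i)) ->
  mu.-integrable setT (fun x => (\sum_i F i x)%:E).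
Proof.
move=> Fi; have := @integrable_sum _ _ _ mu _ measurableT _ (index_enum I) predT _
  (fun i _ => Fi i).
by apply: eq_integrable => // x _; rewrite sumEFin.
Qed.

Lemma integrable_EFin_bounded_mul [h f : T -> R] [M : R] :
  measurable_fun setT h -> (forall x, `|h x| <= M) ->
  mu.-integrable setT (EFin \o f) -> mu.-integrable setT (EFin \o (h \* f)).
Proof.
move=> mh /(bounded_norm_le setT) hb fi.
by apply: eq_integrable (integrableMr measurableT mh hb fi).
Qed.

End integrable_EFin.

Lemma integrable_EFin_bounded {d} {T : measurableType d} {R : realType}
    (mu : {finite_measure set T -> \bar R}) [h : T -> R] [M : R] :
  measurable_fun setT h -> (forall x, `|h x| <= M) ->
  mu.-integrable setT (EFin \o h).
Proof.
move=> mh /(bounded_norm_le setT) hb; apply: measurable_bounded_integrable => //.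
by apply: fin_num_fun_lty; exact: fin_num_measure.
Qed.

Section probability_itv.
Context {R : realType} {k : probability R R} {M : R}.
Hypotheses (M0 : 0 <= M) (k_itv : k `[0, M]%classic = 1%E).

Lemma probability_itv_abs_le : (\int[k]_x `|x%:E| <= M%:E)%E.
Proof.
have k_out : k (~` `[0, M]%classic) = 0%E.
  by rewrite probability_setC ?k_itv ?subee //; exact: measurable_itv.
apply: le_trans (integral_le_bound M%:E measurableT _ _ _) _ => //.
- exists (~` `[0, M]%classic); split => //.
    by apply: measurableC; exact: measurable_itv.
  move=> x /= /not_implyP[_]; apply: contra_not; rewrite /= in_itv /=.
  by move=> /andP[x0 xM]; rewrite lee_fin ger0_norm.
- by rewrite -[leRHS]mule1 lee_pmul // probability_le1.
Qed.

Lemma probability_itv_integrable : k.-integrable setT EFin.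
Proof.
apply/integrableP; split => //.
by apply: le_lt_trans probability_itv_abs_le _; exact: ltry.
Qed.

Lemma probability_itv_mean_le : `|\int[k]_(x in setT) x| <= M.
Proof.
apply: le_trans (le_normr_Rintegral _ probability_itv_integrable) _ => //.
rewrite /Rintegral -lee_fin fineK ?probability_itv_abs_le // ge0_fin_numE.
  by apply: le_lt_trans probability_itv_abs_le _; exact: ltry.
exact: integral_ge0.
Qed.

End probability_itv.

Lemma Rintegral_probability_affine {d} {T : measurableType d} {R : realType}
    [P : probability T R] [f : T -> R] (u v : R) :
  P.-integrable setT (EFin \o f) ->
  \int[P]_(x in setT) (u * f x + v) = u * \int[P]_(x in setT) f x + v.
Proof.
move=> fi; have ci := finite_measure_integrable_cst P v measurableT.
rewrite RintegralD //; last first.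
  by apply: eq_integrable (integrableZl measurableT u fi).
rewrite RintegralZl // Rintegral_cst //; congr (_ + _).
rewrite -[RHS]mulr1; congr (_ * _).
exact: (congr1 fine (probability_setT P)).
Qed.

Section prod_probability.
Context {d1 d2} {X : measurableType d1} {Y : measurableType d2} {R : realType}.
Context {m1 : probability X R} {m2 : probability Y R}.
Context {h : X -> R} {g : Y -> R} {M : R}.
Hypotheses (h_int : m1.-integrable setT (EFin \o h))
  (mg : measurable_fun setT g) (gM : forall y, `|g y| <= M).

Let mh : measurable_fun setT h.
Proof. by apply/measurable_EFinP; case/integrableP: h_int. Qed.

Lemma integrable_prod_fst : (m1 \x m2)%E.-integrable setT (EFin \o (h \o fst)).
Proof.
have mhfst : measurable_fun [set: X * Y] (EFin \o (h \o fst)).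
  by apply/measurable_EFinP; exact: measurableT_comp mh measurable_fst.
apply/integrableP; split => //.
rewrite fubini_tonelli1 //; last exact: measurableT_comp.
rewrite /fubini_F /=.
under eq_integral do rewrite integral_cst //= probability_setT mule1.
by case/integrableP: h_int.
Qed.

Lemma Rintegral_prod_fst :
  \int[(m1 \x m2)%E]_(z in setT) h z.1 = \int[m1]_(x in setT) h x.
Proof.
rewrite /Rintegral -(integral12_prod_meas1 integrable_prod_fst) /fubini_F /=.
by under eq_integral do rewrite integral_cst //= probability_setT mule1.
Qed.

Lemma integrable_prod_mul :
  (m1 \x m2)%E.-integrable setT (fun z => (h z.1 * g z.2)%:E).
Proof.
have := integrable_EFin_bounded_mul (measurableT_comp mg measurable_snd)
  (fun z => gM z.2) integrable_prod_fst.
by apply: eq_integrable => // z _; rewrite /= mulrC.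
Qed.

Lemma Rintegral_prod_mul :
  \int[(m1 \x m2)%E]_(z in setT) (h z.1 * g z.2) =
  \int[m1]_(x in setT) h x * \int[m2]_(y in setT) g y.
Proof.
have g_int := integrable_EFin_bounded m2 mg gM.
have inner x : (\int[m2]_(y in setT) (h x * g y)%:E =
    (h x)%:E * \int[m2]_(y in setT) (g y)%:E)%E.
  by under eq_integral do rewrite EFinM; exact: integralZl.
rewrite /Rintegral -(integral12_prod_meas1 integrable_prod_mul) /fubini_F /=.
under eq_integral do rewrite inner.
rewrite -(fineK (integrable_fin_num _ g_int)) // integralZr //= fineM //.
exact: integrable_fin_num.
Qed.

End prod_probability.

Definition snd_mfun d1 d2 (X : measurableType d1) (Y : measurableType d2) :
  X * Y -> Y := snd.
HB.instance Definition _ d1 d2 (X : measurableType d1) (Y : measurableType d2) :=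
  isMeasurableFun.Build _ _ _ _ (@snd_mfun d1 d2 X Y) (@measurable_snd _ _ X Y).

Section independent_coordinates.
Context {d1 d2} {X : measurableType d1} {Y : measurableType d2} {R : realType}.
Context {P : probability (X * Y)%type R} {PX : probability X R}.
Hypotheses
  (P_indep : forall B C, measurable B -> measurable C ->
     P (B `*` C) = (P (B `*` setT) * P (setT `*` C))%E)
  (PX_marginal : forall B, measurable B -> PX B = P (B `*` setT)).

Local Notation PY := (distribution P (@snd_mfun _ _ X Y)).

Lemma prod_marginalsE Z : measurable Z -> (PX \x PY)%E Z = P Z.
Proof.
apply: product_measure_unique => B C mB mC.
transitivity (P (B `*` setT) * P (setT `*` C))%E; first exact: P_indep.
rewrite -PX_marginal //; congr (_ * P _)%E.
by apply/seteqP; split => -[x y] //= [].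
Qed.

Lemma integral_prod_marginals (f : X * Y -> \bar R) :
  (\int[P]_(z in setT) f z = \int[(PX \x PY)%E]_(z in setT) f z)%E.
Proof. by apply: eq_measure_integral => Z mZ _; exact/esym/prod_marginalsE. Qed.

Context {h : X -> R}.
Hypothesis h_int : PX.-integrable setT (EFin \o h).

Lemma integrable_indep_fst : P.-integrable setT (EFin \o (h \o fst)).
Proof.
have /integrableP[mh h_fin] := integrable_prod_fst (m2 := PY) h_int.
by apply/integrableP; split => //; rewrite integral_prod_marginals.
Qed.

Lemma Rintegral_indep_fst :
  \int[P]_(z in setT) h z.1 = \int[PX]_(x in setT) h x.
Proof.
rewrite {1}/Rintegral integral_prod_marginals -/(Rintegral _ _ _).
exact: Rintegral_prod_fst.
Qed.

Context {g : Y -> R} {M : R}.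
Hypotheses (mg : measurable_fun setT g) (gM : forall y, `|g y| <= M).

Lemma integrable_indep_mul :
  P.-integrable setT (fun z => (h z.1 * g z.2)%:E).
Proof.
have /integrableP[mhg hg_fin] := integrable_prod_mul (m2 := PY) h_int mg gM.
by apply/integrableP; split => //; rewrite integral_prod_marginals.
Qed.

Lemma Rintegral_indep_mul :
  \int[P]_(z in setT) (h z.1 * g z.2) =
  \int[PX]_(x in setT) h x * \int[P]_(z in setT) g z.2.
Proof.
have gsnd_int : P.-integrable setT (EFin \o (g \o snd)).
  exact: integrable_EFin_bounded (measurableT_comp mg measurable_snd)
    (fun z => gM z.2).
rewrite {1}/Rintegral integral_prod_marginals -/(Rintegral _ _ _).
rewrite (Rintegral_prod_mul h_int mg gM); congr (_ * fine _).
by rewrite (integral_distribution _ (f := EFin \o g)) //; exact/measurable_EFinP.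
Qed.

End independent_coordinates.

Section E_data_mean.
Context {R : realType} {dX : measure_display} {Xs : measurableType dX} {A : finType}.
Context {pxt : probability (Xs * R)%type R}.
Context { pi0 : Xs -> R -> A -> R} {kappa : Xs -> R -> A -> probability R R}.

Lemma eq_E_data m (G G' : seq (@sample R dX Xs A) -> R) :
  (forall D, size D = m -> G D = G' D) ->
  E_data pxt pi0 kappa m G = E_data pxt pi0 kappa m G'.
Proof.
elim: m G G' => [|m IH] G G' GG' /=; first exact: GG'.
congr E_sample; apply: funext => s; apply: IH => D sizeD.
by apply: GG'; rewrite /= sizeD.
Qed.

Context {g : @sample R dX Xs A -> R} {mu : R}.

(* Only affine images of [g] are assumed to have a known expectation: no
   integrability of [g] is available to make [E_sample] linear. *)
Hypothesis E_sample_affine :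
  forall k c, E_sample pxt pi0 kappa (fun s => k * (c + g s)) = k * (c + mu).

Lemma E_data_affine_sum m k c :
  E_data pxt pi0 kappa m (fun D => k * (c + \sum_(s <- D) g s)) =
  k * (c + m%:R * mu).
Proof.
elim: m k c => [|m IH] k c /=; first by rewrite big_nil mul0r.
have step s : E_data pxt pi0 kappa m (fun D => k * (c + \sum_(s' <- s :: D) g s')) =
    k * ((c + m%:R * mu) + g s).
  under eq_fun do rewrite big_cons addrA.
  by rewrite IH; ring.
under eq_fun do rewrite step.
by rewrite E_sample_affine -addn1 natrD; ring.
Qed.

Lemma E_data_sample_mean m : (0 < m)%N ->
  E_data pxt pi0 kappa m (fun D => (size D)%:R^-1 * \sum_(s <- D) g s) = mu.
Proof.
move=> m_gt0; rewrite (@eq_E_data _ _ (fun D => m%:R^-1 * (0 + \sum_(s <- D) g s))).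
  by rewrite E_data_affine_sum add0r mulrA mulVf ?mul1r // pnatr_eq0 -lt0n.
by move=> D ->; rewrite add0r.
Qed.

End E_data_mean.

Section Iphi.
Context {R : realType} {L : eqType} {phi : R -> L} {t' : R}.

Lemma Iphi_indic t : Iphi phi t t' = \1_[set s | phi s = phi t'] t.
Proof.
rewrite /Iphi indicE; have [e|ne] := eqVneq (phi t) (phi t').
  by rewrite mem_set.
by rewrite memNset //; apply/eqP.
Qed.

Lemma norm_Iphi_le1 t : `|Iphi phi t t'| <= 1.
Proof. by rewrite /Iphi; case: (_ == _); rewrite ?normr1 ?normr0. Qed.

Lemma measurable_Iphi : measurable [set s | phi s = phi t'] ->
  measurable_fun setT (fun t => Iphi phi t t').
Proof.
move=> mphi; rewrite (_ : (fun t => _) = \1_[set s | phi s = phi t']).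
  exact: measurable_indic.
by apply: funext => t; rewrite Iphi_indic.
Qed.

End Iphi.

Section opfv_bias.
Context {R : realType} {dX : measure_display} {Xs : measurableType dX}.
Context {A : finType} {L : eqType} {T rmax t' : R}.
Context {pxt : probability (Xs * R)%type R}.
Context {pt : R -> R} {pxt' : probability Xs R}.
Context { pi0 : Xs -> R -> A -> R} {pie : Xs -> R -> A -> R}.
Context {kappa : Xs -> R -> A -> probability R R}.
Context {phi : R -> L} {fhat : Xs -> R -> A -> R}.

Hypotheses (hT : 0 < T) (ht' : T < t') (hrmax : 0 <= rmax)
  (hpt_supp : forall s, (s < 0 \/ T < s) -> pt s = 0)
  (hpt_dens : forall B : set R, measurable B ->
      pxt (setT `*` B) = (\int[lebesgue_measure]_(s in B) (pt s)%:E)%E)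
  (hpi0_sum : forall x t, \sum_(a : A) pi0 x t a = 1)
  (hpie_ge0 : forall x t a, 0 <= pie x t a)
  (hpie_sum : forall x t, \sum_(a : A) pie x t a = 1)
  (hpie_meas : forall a, measurable_fun [set: Xs] (fun x => pie x t' a))
  (hkappa_supp : forall x t a, 0 <= t -> kappa x t a `[0, rmax]%classic = 1%E)
  (hq_meas : forall a, measurable_fun [set: (Xs * R)%type]
                        (fun xt => qmean kappa xt.1 xt.2 a))
  (hq'_meas : forall a, measurable_fun [set: Xs] (fun x => qmean kappa x t' a))
  (hphi_meas : measurable [set s : R | phi s = phi t'])
  (hfhat_int : forall a, pxt.-integrable [set: (Xs * R)%type]
                          (fun xt => (fhat xt.1 xt.2 a)%:E))
  (hfhat'_int : forall a, pxt'.-integrable [set: Xs] (fun x => (fhat x t' a)%:E))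
  (hstat : forall (B : set Xs) (C : set R), measurable B -> measurable C ->
      pxt (B `*` C) = (pxt (B `*` setT) * pxt (setT `*` C))%E)
  (hstat' : forall B : set Xs, measurable B -> pxt' B = pxt (B `*` setT))
  (hsupp : forall x t a, 0 <= t <= T -> 0 < pie x t' a -> 0 < pi0 x t a)
  (hpphi : 0 < pphi pt T phi t').

Definition dm_value (x : Xs) : R := \sum_b pie x t' b * fhat x t' b.

Definition target_residual (x : Xs) : R :=
  \sum_b pie x t' b * (qmean kappa x t' b - fhat x t' b).

(* [qmean] is only controlled at times [t >= 0]; cutting it down to the
   logging window changes nothing [pxt]-almost surely. *)
Definition window_q (x : Xs) (t : R) (a : A) : R :=
  qmean kappa x t a * \1_(`[0, T]%classic) t.

Definition opfv_mean (xt : Xs * R) : R :=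
  dm_value xt.1 + \sum_a Iphi phi xt.2 t' / pphi pt T phi t' * pie xt.1 t' a *
                     (window_q xt.1 xt.2 a - fhat xt.1 xt.2 a).

Lemma window_qE x t a : 0 <= t <= T -> window_q x t a = qmean kappa x t a.
Proof. by move=> tT; rewrite /window_q indicE mem_set ?mulr1. Qed.

Lemma norm_window_q_le x t a : `|window_q x t a| <= rmax.
Proof.
rewrite /window_q indicE.
have [|_] := boolP (t \in _); last by rewrite mulr0 normr0.
rewrite inE /= in_itv /= mulr1 => /andP[t0 _].
exact/probability_itv_mean_le/hkappa_supp.
Qed.

Lemma measurable_window_q a :
  measurable_fun setT (fun xt : Xs * R => window_q xt.1 xt.2 a).
Proof.
apply: measurable_funM; first exact: hq_meas.
by apply: measurableT_comp; [exact: measurable_indic | exact: measurable_snd].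
Qed.

Lemma norm_pie_le1 x t a : `|pie x t a| <= 1.
Proof. by rewrite ger0_norm // le1_nonneg_sum1. Qed.

Lemma norm_Iphi_div_le t :
  `|Iphi phi t t' / pphi pt T phi t'| <= (pphi pt T phi t')^-1.
Proof.
have p_inv_ge0 : 0 <= (pphi pt T phi t')^-1 by rewrite invr_ge0 ltW.
by rewrite normrM (ger0_norm p_inv_ge0) -[leRHS]mul1r ler_wpM2r ?norm_Iphi_le1.
Qed.

Lemma measurable_Iphi_div :
  measurable_fun setT (fun t => Iphi phi t t' / pphi pt T phi t').
Proof. by apply: measurable_funM => //; exact: measurable_Iphi. Qed.

Lemma integrable_dm_value : pxt'.-integrable setT (EFin \o dm_value).
Proof.
apply: integrable_EFin_sum => b.
exact: integrable_EFin_bounded_mul (hpie_meas b) (fun x => norm_pie_le1 x t' b)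
  (hfhat'_int b).
Qed.

Lemma integrable_target_residual : pxt'.-integrable setT (EFin \o target_residual).
Proof.
apply: integrable_EFin_sum => b.
apply: integrable_EFin_bounded_mul (hpie_meas b) (fun x => norm_pie_le1 x t' b) _.
have q_int : pxt'.-integrable setT (EFin \o (fun x => qmean kappa x t' b)).
  apply: integrable_EFin_bounded (hq'_meas b) _ => x.
  by apply/probability_itv_mean_le/hkappa_supp/ltW/(lt_trans _ ht').
by apply: eq_integrable (integrableB measurableT q_int (hfhat'_int b)).
Qed.

Lemma integrable_opfv_mean : pxt.-integrable setT (EFin \o opfv_mean).
Proof.
have dm_int := integrable_indep_fst hstat hstat' integrable_dm_value.
have corr_int a : pxt.-integrable setT (EFin \o (fun xt : Xs * R =>
    Iphi phi xt.2 t' / pphi pt T phi t' * pie xt.1 t' a *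
    (window_q xt.1 xt.2 a - fhat xt.1 xt.2 a))).
  apply: (integrable_EFin_bounded_mul (M := (pphi pt T phi t')^-1)).
  - apply: measurable_funM.
      exact: measurableT_comp measurable_Iphi_div measurable_snd.
    exact: measurableT_comp (hpie_meas a) measurable_fst.
  - move=> xt; rewrite normrM -[leRHS]mulr1.
    by apply: ler_pM => //; [exact: norm_Iphi_div_le | exact: norm_pie_le1].
  - have wq_int := integrable_EFin_bounded pxt (measurable_window_q a)
      (fun xt => norm_window_q_le xt.1 xt.2 a).
    by apply: eq_integrable (integrableB measurableT wq_int (hfhat_int a)).
have := integrableD measurableT dm_int (integrable_EFin_sum corr_int).
by apply: eq_integrable.
Qed.

Lemma pt_outside_window s : ~ `[0, T]%classic s -> pt s = 0.
Proof.
move=> sT; apply: hpt_supp; move/negP: sT; rewrite /= in_itv /= negb_and -!ltNge.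
by case/orP; [left | right].
Qed.

Lemma pxt_outside_window : pxt (setT `*` ~` `[0, T]%classic) = 0%E.
Proof.
transitivity (\int[lebesgue_measure]_(s in ~` `[0%R, T]%classic) (pt s)%:E)%E.
  by apply: hpt_dens; apply: measurableC; exact: measurable_itv.
by apply: integral0_eq => s sT; rewrite pt_outside_window.
Qed.

Lemma Rintegral_pxt_window (f g : Xs * R -> R) :
  (forall x t, 0 <= t <= T -> f (x, t) = g (x, t)) ->
  \int[pxt]_(xt in setT) f xt = \int[pxt]_(xt in setT) g xt.
Proof.
move=> fg; have mN : measurable (setT `*` ~` `[0, T]%classic : set (Xs * R)).
  by apply: measurableX => //; apply: measurableC; exact: measurable_itv.
apply: (Rintegral_eq_off_null mN pxt_outside_window) => -[x t] out.
by apply: fg; apply: contrapT => tT; apply: out; split => //=; rewrite in_itv.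
Qed.

Lemma Rintegral_Iphi :
  \int[pxt]_(xt in setT) Iphi phi xt.2 t' = pphi pt T phi t'.
Proof.
set Phi := [set s | phi s = phi t'].
rewrite /Rintegral (eq_integral (fun xt => (\1_(setT `*` Phi) xt)%:E)); last first.
  by move=> xt _; rewrite Iphi_indic !indicE in_setX in_setT.
rewrite integral_indic ?setIT //; last exact: measurableX.
transitivity (fine (\int[lebesgue_measure]_(s in Phi) (pt s)%:E)%E).
  by congr fine; exact: hpt_dens.
rewrite /pphi /Rintegral; congr fine.
rewrite [LHS]integral_mkcond [RHS]integral_mkcond; apply: eq_integral => s _.
rewrite !patchE Iphi_indic indicE.
have [sT|sT] := boolP (s \in `[0, T]%classic).
  by case: (s \in Phi); rewrite ?mulr1 ?mulr0.
by rewrite pt_outside_window; [case: ifP | rewrite -notin_setE].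
Qed.

(* Common support: [pie x t' a] vanishes wherever [pi0 x t a] does, so the
   junk value [_ / 0 = 0] of the importance weight is harmless. *)
Lemma importance_weight x t a : 0 <= t <= T ->
  pi0 x t a * (pie x t' a / pi0 x t a) = pie x t' a.
Proof.
move=> tT; have [pi0_0|pi0_neq0] := eqVneq (pi0 x t a) 0; last first.
  by rewrite mulrCA mulfV ?mulr1.
rewrite pi0_0 mul0r; apply/esym/eqP; rewrite eq_le hpie_ge0 andbT leNgt.
by apply/negP => /(hsupp x t a tT); rewrite pi0_0 ltxx.
Qed.

Lemma opfv_term_conditional_mean x t k c : 0 <= t <= T ->
  \sum_a pi0 x t a * \int[kappa x t a]_(r in setT)
      (k * (c + opfv_term pt T phi t' pi0 pie fhat (x, t, a, r))) =
  k * (c + opfv_mean (x, t)).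
Proof.
move=> tT; set w := Iphi phi t t' / pphi pt T phi t'.
transitivity (\sum_a (k * (c + dm_value x) * pi0 x t a +
    k * (w * pie x t' a * (window_q x t a - fhat x t a)))).
  apply: eq_bigr => a _; have := importance_weight x t a tT.
  set u := pie x t' a / pi0 x t a => weight.
  rewrite (@eq_Rintegral _ _ _ _ _ (fun r => k * (w * u) * r +
      k * (c + dm_value x - w * u * fhat x t a))); last first.
    by move=> r _; rewrite /opfv_term /dm_value -/w -/u; ring.
  rewrite (Rintegral_probability_affine (f := id)); last first.
    exact/probability_itv_integrable/hkappa_supp/(andP tT).1.
  by rewrite window_qE // -weight /qmean; ring.
by rewrite big_split /= -mulr_sumr hpi0_sum -mulr_sumr /opfv_mean /=; ring.
Qed.

Lemma E_sample_opfv_term k c :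
  E_sample pxt pi0 kappa (fun s => k * (c + opfv_term pt T phi t' pi0 pie fhat s)) =
  k * (c + \int[pxt]_(xt in setT) opfv_mean xt).
Proof.
rewrite /E_sample [LHS](Rintegral_pxt_window _ (fun xt => k * opfv_mean xt + k * c)).
  by rewrite Rintegral_probability_affine ?integrable_opfv_mean //; ring.
by move=> x t tT /=; rewrite opfv_term_conditional_mean //; ring.
Qed.

Lemma E_data_V_opfv n : (0 < n)%N ->
  E_data pxt pi0 kappa n (V_opfv pt T phi t' pi0 pie fhat) =
  \int[pxt]_(xt in setT) opfv_mean xt.
Proof. exact: E_data_sample_mean E_sample_opfv_term n. Qed.

Lemma V_true_split : V_true pxt' pie kappa t' =
  \int[pxt']_(x in setT) dm_value x + \int[pxt']_(x in setT) target_residual x.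
Proof.
rewrite /V_true -RintegralD // ?integrable_dm_value ?integrable_target_residual //.
apply: eq_Rintegral => x _; rewrite /dm_value /target_residual -big_split /=.
by apply: eq_bigr => b _; ring.
Qed.

Lemma bias_integrand_window x t : 0 <= t <= T ->
  \sum_a pie x t' a * (Iphi phi t t' / pphi pt T phi t' *
     ((qmean kappa x t a - qmean kappa x t' a) - (fhat x t a - fhat x t' a))) =
  opfv_mean (x, t) - dm_value x -
  target_residual x * (Iphi phi t t' / pphi pt T phi t').
Proof.
move=> tT; rewrite /opfv_mean /= [dm_value x + _]addrC addrK mulr_suml -sumrB.
by apply: eq_bigr => a _; rewrite window_qE //; ring.
Qed.

Lemma opfv_bias_integral :
  \int[pxt]_(xt in setT) opfv_mean xt -
    (\int[pxt']_(x in setT) dm_value x + \int[pxt']_(x in setT) target_residual x) =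
  \int[pxt]_(xt in setT)
    (\sum_a pie xt.1 t' a * (Iphi phi xt.2 t' / pphi pt T phi t' *
       ((qmean kappa xt.1 xt.2 a - qmean kappa xt.1 t' a)
        - (fhat xt.1 xt.2 a - fhat xt.1 t' a)))).
Proof.
have dm_int := integrable_indep_fst hstat hstat' integrable_dm_value.
have res_int := integrable_indep_mul hstat hstat' integrable_target_residual
  measurable_Iphi_div norm_Iphi_div_le.
have Iphi_div_int :
    \int[pxt]_(z in setT) (Iphi phi z.2 t' / pphi pt T phi t') = 1.
  rewrite RintegralZr // ?Rintegral_Iphi ?mulfV ?gt_eqF //.
  have := integrable_EFin_bounded pxt (measurableT_comp (measurable_Iphi hphi_meas)
    measurable_snd) (fun z => norm_Iphi_le1 z.2).
  by apply: eq_integrable.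
rewrite [RHS](Rintegral_pxt_window _ (fun xt => opfv_mean xt - dm_value xt.1 -
  target_residual xt.1 * (Iphi phi xt.2 t' / pphi pt T phi t')));
  last exact: bias_integrand_window.
rewrite RintegralB // ?RintegralB // ?integrable_opfv_mean //; last first.
  by apply: eq_integrable (integrableB measurableT integrable_opfv_mean dm_int).
rewrite (Rintegral_indep_fst hstat hstat' integrable_dm_value).
rewrite (Rintegral_indep_mul hstat hstat' integrable_target_residual
  measurable_Iphi_div norm_Iphi_div_le).
by rewrite Iphi_div_int; ring.
Qed.

End opfv_bias.

Theorem theorem3p3
  (R : realType) (dX : measure_display) (Xs : measurableType dX)
  (A : finType) (L : eqType)
  (T rmax t' : R) (n : nat)
  (pxt : probability (Xs * R)%type R)     (* joint law p(x,t) of logged contexts/times *)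
  (pt : R -> R)                           (* marginal density p(t) of t *)
  (pxt' : probability Xs R)               (* p(x | t') at the target time *)
  (pi0 pie : Xs -> R -> A -> R)           (* logging / evaluation policies *)
  (kappa : Xs -> R -> A -> probability R R) (* reward distributions p(r|x,t,a) *)
  (phi : R -> L)                          (* time feature function *)
  (fhat : Xs -> R -> A -> R)              (* fixed reward regressor *)
  (* setting *)
  (hT : 0 < T) (ht' : T < t') (hrmax : 0 <= rmax) (hn : (0 < n)%N)
  (hpt_meas : measurable_fun [set: R] pt)
  (hpt_ge0 : forall s, 0 <= pt s)
  (hpt_supp : forall s, (s < 0 \/ T < s) -> pt s = 0)
  (hpt_dens : forall B : set R, measurable B ->
      pxt (setT `*` B) = (\int[lebesgue_measure]_(s in B) (pt s)%:E)%E)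
  (hpi0_ge0 : forall x t a, 0 <= pi0 x t a)
  (hpi0_sum : forall x t, \sum_(a : A) pi0 x t a = 1)
  (hpie_ge0 : forall x t a, 0 <= pie x t a)
  (hpie_sum : forall x t, \sum_(a : A) pie x t a = 1)
  (hpi0_meas : forall a, measurable_fun [set: (Xs * R)%type]
                          (fun xt => pi0 xt.1 xt.2 a))
  (hpie_meas : forall a, measurable_fun [set: Xs] (fun x => pie x t' a))
  (hkappa_supp : forall x t a, 0 <= t -> kappa x t a `[0, rmax]%classic = 1%E)
  (hq_meas : forall a, measurable_fun [set: (Xs * R)%type]
                        (fun xt => qmean kappa xt.1 xt.2 a))
  (hq'_meas : forall a, measurable_fun [set: Xs] (fun x => qmean kappa x t' a))
  (hphi_meas : measurable [set s : R | phi s = phi t'])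
  (hfhat_int : forall a, pxt.-integrable [set: (Xs * R)%type]
                          (fun xt => (fhat xt.1 xt.2 a)%:E))
  (hfhat'_int : forall a, pxt'.-integrable [set: Xs] (fun x => (fhat x t' a)%:E))
  (* stationarity: p(x,t) = p(x) p(t) and p(x | t') = p(x) *)
  (hstat : forall (B : set Xs) (C : set R), measurable B -> measurable C ->
      pxt (B `*` C) = (pxt (B `*` setT) * pxt (setT `*` C))%E)
  (hstat' : forall B : set Xs, measurable B -> pxt' B = pxt (B `*` setT))
  (* common support *)
  (hsupp : forall x t a, 0 <= t <= T -> 0 < pie x t' a -> 0 < pi0 x t a)
  (* p(phi(t')) > 0 *)
  (hpphi : 0 < pphi pt T phi t') :
  E_data pxt pi0 kappa n (V_opfv pt T phi t' pi0 pie fhat) - V_true pxt' pie kappa t'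
  = \int[pxt]_(xt in [set: (Xs * R)%type])
      (\sum_(a : A) pie xt.1 t' a *
         (Iphi phi xt.2 t' / pphi pt T phi t' *
           ((qmean kappa xt.1 xt.2 a - qmean kappa xt.1 t' a)
            - (fhat xt.1 xt.2 a - fhat xt.1 t' a)))).
Proof.
rewrite (E_data_V_opfv (rmax := rmax) (pxt' := pxt')) //.
rewrite (V_true_split (T := T) (rmax := rmax) (fhat := fhat)) //.
exact: (opfv_bias_integral (rmax := rmax)).
Qed.
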